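(* Let $b>1$ be an integer, let $H$ be a generalized $b$-happy function with digit mean $\mu$ and digit standard deviation $\sigma$, and let $C\subseteq\mathbb{N}$. Suppose $I$ is an $n$-strict interval with type-$C$ density $d$, where the positive integer $n$ satisfies bound (B): (B1) $4\left(1+3\mu+\sqrt{2}\,\sigma\, b^{5n/8}\right)\le b^{n-1}$, (B2) $\sqrt{3\mu b}\,\sigma\le b^{3n/8}$, (B3) $4\mu\left(3\mu+1+b^{3n/4}+2\sigma\mu^{-1/2}b^{5n/8}\right)\le b^{n-1}$. Then there exist an integer $n_2\ge \frac{b^{n-1}}{\mu}$ and an $n_2$-strict interval $I_2$ whose type-$C$ density is at least $$d\left(1-b^{-n/4}\right)\left(1-\frac{2\sigma}{\sqrt{\mu}}b^{-n/8}\right).$$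
   Context: A generalized $b$-happy function: fix an integer $b>1$ and non-negative integers $h(0),\dots,h(b-1)$ with $h(0)=0$, $h(1)=1$; for $n=\sum_{i=0}^k a_ib^i$ in base $b$, $H(n)=\sum_{i=0}^k h(a_i)$. Digit mean $\mu=\frac1b\sum_{j=0}^{b-1}h(j)$, digit variance $\sigma^2=\frac1b\sum_{j=0}^{b-1}(h(j)-\mu)^2$. An integer $n$ is type-$C$ if $H^k(n)\in C$ for some integer $k\ge0$. An integer interval $[a,c]$ is the set of integers $x$ with $a\le x\le c$; $|I|$ is its cardinality. The type-$C$ density of a finite nonempty integer interval $I$ is $|\{n\in I:n\text{ type-}C\}|/|I|$. For a positive integer $m$, an integer interval $I$ is $m$-strict if $I\subseteq[b^{m-1},b^m-1]$ and $|I|=b^{3m/4}$. *)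

From Stdlib Require Import Reals Lra Lia Arith List ClassicalDescription.
Import ListNotations.
Open Scope R_scope.

(* H(n) = sum of h over the base-b digits of n (fuel = n suffices when b > 1). *)
Fixpoint Haux (b : nat) (h : nat -> nat) (fuel m : nat) : nat :=
  match fuel with
  | O => O
  | S f => if Nat.eqb m 0 then O else (h (Nat.modulo m b) + Haux b h f (Nat.div m b))%nat
  end.

Definition Hfun (b : nat) (h : nat -> nat) (m : nat) : nat := Haux b h m m.

Definition digit_mean (b : nat) (h : nat -> nat) : R :=
  (/ INR b) * sum_f_R0 (fun j => INR (h j)) (b - 1).

Definition digit_var (b : nat) (h : nat -> nat) : R :=
  (/ INR b) * sum_f_R0 (fun j => (INR (h j) - digit_mean b h) ^ 2) (b - 1).

Definition digit_sd (b : nat) (h : nat -> nat) : R := sqrt (digit_var b h).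

Definition typeC (b : nat) (h : nat -> nat) (C : nat -> Prop) (m : nat) : Prop :=
  exists k : nat, C (Nat.iter k (Hfun b h) m).

Definition icard (a c : nat) : nat := (c + 1 - a)%nat.

Definition count_typeC (b : nat) (h : nat -> nat) (C : nat -> Prop) (a c : nat) : nat :=
  length (filter (fun x => if excluded_middle_informative (typeC b h C x) then true else false)
                 (seq a (icard a c))).

Definition density (b : nat) (h : nat -> nat) (C : nat -> Prop) (a c : nat) : R :=
  INR (count_typeC b h C a c) / INR (icard a c).

Definition strict (b m a c : nat) : Prop :=
  (0 < m)%nat /\ (b ^ (m - 1) <= a)%nat /\ (c <= b ^ m - 1)%nat /\
  INR (icard a c) = Rpower (INR b) (3 * INR m / 4).

From Stdlib Require Import Reals Lra Lia Arith ZArith List Classical ClassicalDescription.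
Open Scope R_scope.

(* Put [B = b ^ (n / 8)], so that [|I| = B ^ 6] and [I] lies in [[b ^ (n - 1), B ^ 8)].
   Take [j] close to [b ^ (n - 1) / (4 mu)] and [k = 3 j].  The digit sums [H y] of the
   [y < b ^ k] have mean [k mu] and variance [k sigma^2], so by Chebyshev all but a
   fraction [B ^ -2] of them lie within [w = sigma B sqrt k] of [k mu].  For a [j]-digit
   prefix [p] with [H p = s], the block [[p b ^ k, (p + 1) b ^ k)] is [4 j]-strict and,
   as [H (p b ^ k + y) = s + H y] and [x] is type-C as soon as [H x] is, its density is at
   least the proportion of [y] with [s + H y] type-C.  For every concentrated [y], some
   [|I| + 2 w] consecutive values of [s] make [s + H y] sweep all of [I]; averaging over
   these [s] yields a block almost as dense as [I].  (B1) and (B3) ensure that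
   [k mu +- w] stays below [I] and that the sums [s] needed do not exceed [j]. *)

Fixpoint rsum (f : nat -> R) (n : nat) : R :=
  match n with O => 0 | S n => rsum f n + f n end.

Lemma rsum_ext f g n : (forall i, (i < n)%nat -> f i = g i) -> rsum f n = rsum g n.
Proof.
  induction n as [|n IH]; intros Hfg; simpl; [reflexivity|].
  rewrite IH by (intros; apply Hfg; lia). rewrite Hfg by lia. reflexivity.
Qed.

Lemma rsum_le f g n : (forall i, (i < n)%nat -> f i <= g i) -> rsum f n <= rsum g n.
Proof.
  induction n as [|n IH]; intros Hfg; simpl; [lra|].
  assert (f n <= g n) by (apply Hfg; lia).
  assert (rsum f n <= rsum g n) by (apply IH; intros; apply Hfg; lia).
  lra.
Qed.

Lemma rsum_plus f g n : rsum (fun i => f i + g i) n = rsum f n + rsum g n.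
Proof. induction n; simpl; lra. Qed.

Lemma rsum_scal c f n : rsum (fun i => c * f i) n = c * rsum f n.
Proof. induction n as [|n IH]; simpl; [ring|]. rewrite IH; ring. Qed.

Lemma rsum_const c n : rsum (fun _ => c) n = INR n * c.
Proof. induction n as [|n IH]; simpl rsum; [simpl; ring|]. rewrite IH, S_INR; ring. Qed.

Lemma rsum_app f p q : rsum f (p + q) = rsum f p + rsum (fun i => f (p + i)%nat) q.
Proof.
  induction q as [|q IH]; simpl; [rewrite Nat.add_0_r; ring|].
  rewrite Nat.add_succ_r; simpl; rewrite IH; ring.
Qed.

Lemma rsum_mul f m c : rsum f (m * c) = rsum (fun q => rsum (fun d => f (q * c + d)%nat) c) m.
Proof.
  induction m as [|m IH]; simpl; [reflexivity|].
  rewrite Nat.add_comm, rsum_app, IH; reflexivity.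
Qed.

Lemma rsum_swap f p q :
  rsum (fun i => rsum (fun j => f i j) q) p = rsum (fun j => rsum (fun i => f i j) p) q.
Proof.
  induction p as [|p IH]; simpl.
  - rewrite rsum_const; ring.
  - rewrite IH, <- rsum_plus; reflexivity.
Qed.

Lemma rsum_ge0 f n : (forall i, (i < n)%nat -> 0 <= f i) -> 0 <= rsum f n.
Proof.
  intros Hf. replace 0 with (rsum (fun _ => 0) n) by (rewrite rsum_const; ring).
  now apply rsum_le.
Qed.

Lemma rsum_ge_term f n i : (forall i, (i < n)%nat -> 0 <= f i) -> (i < n)%nat -> f i <= rsum f n.
Proof.
  intros Hf Hi. replace n with (i + (1 + (n - i - 1)))%nat by lia.
  rewrite rsum_app, rsum_app. simpl rsum at 2. rewrite Nat.add_0_r.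
  assert (0 <= rsum f i) by (apply rsum_ge0; intros; apply Hf; lia).
  assert (0 <= rsum (fun j => f (i + (1 + j)))%nat (n - i - 1))
    by (apply rsum_ge0; intros; apply Hf; lia).
  lra.
Qed.

Lemma rsum_window f p q L M : (forall i, 0 <= f i) -> (p <= q)%nat -> (q + L <= p + M)%nat ->
  rsum (fun i => f (q + i)%nat) L <= rsum (fun i => f (p + i)%nat) M.
Proof.
  intros Hf Hpq HLM.
  replace M with ((q - p) + (L + (M - (q - p) - L)))%nat by lia.
  rewrite rsum_app, rsum_app.
  rewrite (rsum_ext (fun i => f (p + (q - p + i))%nat) (fun i => f (q + i)%nat))
    by (intros; f_equal; lia).
  assert (0 <= rsum (fun i => f (p + i)%nat) (q - p)) by (apply rsum_ge0; auto).
  assert (0 <= rsum (fun i => f (p + (q - p + (L + i)))%nat) (M - (q - p) - L))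
    by (apply rsum_ge0; auto).
  lra.
Qed.

Lemma sum_f_R0_rsum f m : sum_f_R0 f m = rsum f (S m).
Proof. induction m as [|m IH]; simpl in *; [ring|]. rewrite IH; ring. Qed.

Lemma length_filter_rsum (g : nat -> bool) s m :
  INR (length (filter g (seq s m))) = rsum (fun i => if g (s + i)%nat then 1 else 0) m.
Proof.
  induction m as [|m IH]; [reflexivity|].
  rewrite seq_S, filter_app, length_app, plus_INR, IH; simpl.
  destruct (g (s + m)%nat); simpl; ring.
Qed.

Lemma exists_argmax (g : nat -> R) M :
  (0 < M)%nat -> exists i, (i < M)%nat /\ forall i', (i' < M)%nat -> g i' <= g i.
Proof.
  induction M as [|M IH]; intros HM; [lia|].
  destruct (Nat.eq_dec M 0) as [->|HM0].
  - exists 0%nat; split; [lia|]; intros i' Hi'; replace i' with 0%nat by lia; lra.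
  - destruct IH as [i [Hi Hmax]]; [lia|].
    destruct (Rle_dec (g M) (g i)).
    + exists i; split; [lia|]; intros i' Hi'.
      destruct (Nat.eq_dec i' M) as [->|]; [assumption|apply Hmax; lia].
    + exists M; split; [lia|]; intros i' Hi'.
      destruct (Nat.eq_dec i' M) as [->|]; [lra|].
      specialize (Hmax i' ltac:(lia)); lra.
Qed.

Lemma nat_floor_exists x : 0 <= x -> exists e : nat, INR e <= x < INR e + 1.
Proof.
  intros Hx. destruct (archimed x) as [H1 H2].
  assert (Hu : (0 < up x)%Z) by (apply lt_IZR; lra).
  exists (Z.to_nat (up x - 1)).
  rewrite INR_IZR_INZ, Z2Nat.id, minus_IZR by lia. simpl. lra.
Qed.

Lemma nat_ceil_exists x : 0 <= x -> exists m : nat, x <= INR m < x + 1.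
Proof.
  intros Hx. destruct (nat_floor_exists x Hx) as [e He].
  destruct (Req_dec (INR e) x) as [E|E].
  - exists e; lra.
  - exists (S e). rewrite S_INR. lra.
Qed.

Lemma nat_last_true (P : nat -> Prop) k j0 : P j0 -> ~ P (j0 + k)%nat ->
  exists j, (j0 <= j)%nat /\ P j /\ ~ P (S j).
Proof.
  revert j0; induction k as [|k IH]; intros j0 H0 Hk.
  - rewrite Nat.add_0_r in Hk. contradiction.
  - destruct (classic (P (S j0))) as [H|H].
    + destruct (IH (S j0) H) as [j [Hj1 Hj2]]; [rewrite Nat.add_succ_comm; exact Hk|].
      exists j; split; [lia|exact Hj2].
    + exists j0; auto.
Qed.

Definition near_ind (t w x : R) : R := if Rle_dec (Rabs (x - t)) w then 1 else 0.

Lemma chebyshev_count (f : nat -> R) (N : nat) (t w c : R) :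
  0 <= c -> 0 <= w -> rsum (fun y => (f y - t) ^ 2) N <= c * w ^ 2 * INR N ->
  INR N * (1 - c) <= rsum (fun y => near_ind t w (f y)) N.
Proof.
  intros Hc Hw Hsum.
  assert (HN : 0 <= INR N) by apply pos_INR.
  destruct (Req_dec w 0) as [->|Hw0].
  - rewrite (rsum_ext _ (fun _ => 1)), rsum_const; [nra|].
    intros y Hy. unfold near_ind. destruct Rle_dec as [|Hfar]; [reflexivity|].
    assert (Hy2 := rsum_ge_term (fun y => (f y - t) ^ 2) N y (fun _ _ => pow2_ge_0 _) Hy).
    replace (c * 0 ^ 2 * INR N) with 0 in Hsum by ring.
    assert (Hsq : (f y - t) ^ 2 = 0) by (pose proof (pow2_ge_0 (f y - t)); lra).
    assert (Hdev : f y - t = 0) by (apply NNPP; intros E; exact (pow_nonzero _ 2 E Hsq)).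
    rewrite Hdev, Rabs_R0 in Hfar. lra.
  - assert (Hfar : forall y, (1 - near_ind t w (f y)) * w ^ 2 <= (f y - t) ^ 2).
    { intros y. unfold near_ind. destruct Rle_dec as [|Hfar].
      - rewrite Rminus_diag, Rmult_0_l. apply pow2_ge_0.
      - rewrite Rminus_0_r, Rmult_1_l, <- !Rsqr_pow2, (Rsqr_abs (f y - t)).
        apply Rsqr_incr_1; [lra|lra|apply Rabs_pos]. }
    assert (Hle : rsum (fun y => (1 - near_ind t w (f y)) * w ^ 2) N <= c * w ^ 2 * INR N)
      by (eapply Rle_trans; [apply rsum_le; intros; apply Hfar|exact Hsum]).
    rewrite (rsum_ext _ (fun y => w ^ 2 * 1 + (- w ^ 2) * near_ind t w (f y)))
      in Hle by (intros; ring).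
    rewrite rsum_plus, rsum_scal, rsum_scal, rsum_const in Hle.
    assert (0 < w ^ 2) by (apply pow_lt; lra).
    nra.
Qed.

Lemma near_window (T : nat -> R) (a L s0 M x : nat) (t w : R) :
  (forall z, 0 <= T z) ->
  INR s0 < INR a - t - w + 1 -> INR a + INR L - 1 - t + w < INR (s0 + M) ->
  near_ind t w (INR x) * rsum (fun i => T (a + i)%nat) L
  <= rsum (fun i => T (s0 + x + i)%nat) M.
Proof.
  intros HT Hs0 HM. unfold near_ind. destruct Rle_dec as [Hnear|].
  - pose proof (Rle_abs (INR x - t)). pose proof (Rle_abs (- (INR x - t))).
    rewrite Rabs_Ropp in *. rewrite Rmult_1_l.
    apply rsum_window; [exact HT| |].
    + assert (Hlt : INR (s0 + x) < INR (S a)) by (rewrite plus_INR, S_INR; lra).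
      apply INR_lt in Hlt. lia.
    + assert (Hlt : INR (a + L) < INR (S (s0 + M + x)))
        by (rewrite S_INR, !plus_INR in *; lra).
      apply INR_lt in Hlt. lia.
  - rewrite Rmult_0_l. apply rsum_ge0. auto.
Qed.

(* Every [y] whose value [f y] lies within [w] of [t] sees the whole window
   [[a, a + L)] inside one of [L + 2 w] consecutive shifts of [f y]; averaging over
   the shifts selects one that does at least as well as the window. *)
Lemma window_averaging (T : nat -> R) (f : nat -> nat) (N a L j : nat) (t w : R) :
  (forall z, 0 <= T z) -> (2 <= L)%nat -> 0 <= w ->
  t + w < INR a -> INR a + INR L - 1 - t + w < INR j + 1 ->
  exists s, (1 <= s <= j)%nat /\
    rsum (fun y => near_ind t w (INR (f y))) N * rsum (fun i => T (a + i)%nat) L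
    <= (INR L + 2 * w) * rsum (fun y => T (s + f y)%nat) N.
Proof.
  intros HT HL Hw Hlow Hhigh.
  assert (HL2 : 2 <= INR L) by (apply (le_INR 2); exact HL).
  destruct (nat_ceil_exists (INR a - t - w)) as [s0 Hs0]; [lra|].
  destruct (nat_floor_exists (INR a + INR L - 1 - t + w)) as [e He]; [lra|].
  assert (Hs0e : (1 <= s0 <= e)%nat).
  { split; [apply (INR_lt 0)|apply Nat.lt_succ_r, INR_lt; rewrite S_INR]; simpl; lra. }
  assert (Hej : (e <= j)%nat) by (apply Nat.lt_succ_r, INR_lt; rewrite S_INR; lra).
  set (M := (e + 1 - s0)%nat).
  assert (HsM : INR (s0 + M) = INR e + 1)
    by (unfold M; replace (s0 + (e + 1 - s0))%nat with (S e) by lia; apply S_INR).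
  set (G := fun i => rsum (fun y => T (s0 + i + f y)%nat) N).
  destruct (exists_argmax G M) as [i [Hi Hmax]]; [unfold M; lia|].
  exists (s0 + i)%nat. split; [unfold M in Hi; lia|].
  assert (HGi : 0 <= G i) by (apply rsum_ge0; auto).
  assert (HML : INR M <= INR L + 2 * w) by (rewrite plus_INR in HsM; lra).
  apply Rle_trans with (INR M * G i); [|apply Rmult_le_compat_r; assumption].
  rewrite Rmult_comm, <- rsum_scal.
  apply Rle_trans with (rsum (fun y => rsum (fun i => T (s0 + f y + i)%nat) M) N).
  { apply rsum_le. intros y _. rewrite Rmult_comm. apply near_window; auto; lra. }
  rewrite rsum_swap, <- rsum_const. apply rsum_le. intros i' Hi'.
  apply Rle_trans with (G i'); [|apply Hmax; exact Hi'].
  right. apply rsum_ext. intros y _. f_equal. lia.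
Qed.

Section Digits.
Variables (b : nat) (h : nat -> nat).
Hypotheses (Hb : (1 < b)%nat) (h0 : h 0%nat = 0%nat).

Lemma Haux_fuel_irrelevant f1 f2 m : (m <= f1)%nat -> (m <= f2)%nat ->
  Haux b h f1 m = Haux b h f2 m.
Proof.
  revert f2 m; induction f1 as [|f1 IH]; intros f2 m H1 H2.
  - replace m with 0%nat by lia. destruct f2; reflexivity.
  - destruct f2 as [|f2]; [replace m with 0%nat by lia; reflexivity|]. simpl.
    destruct (Nat.eqb m 0) eqn:Hm; [reflexivity|]. apply Nat.eqb_neq in Hm.
    assert (m / b < m)%nat by (apply Nat.div_lt; lia).
    f_equal; apply IH; lia.
Qed.

Lemma Hfun_digit x d : (d < b)%nat -> Hfun b h (x * b + d) = (h d + Hfun b h x)%nat.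
Proof.
  intros Hd. unfold Hfun.
  destruct (x * b + d)%nat as [|m] eqn:Em.
  - assert (x = 0%nat /\ d = 0%nat) as [-> ->] by nia. simpl. now rewrite h0.
  - simpl. rewrite <- Em.
    replace ((x * b + d) mod b)%nat with d
      by (rewrite Nat.add_comm, Nat.Div0.mod_add, Nat.mod_small; auto).
    replace ((x * b + d) / b)%nat with x
      by (rewrite Nat.div_add_l, Nat.div_small by lia; lia).
    f_equal. apply Haux_fuel_irrelevant; nia.
Qed.

Lemma Hfun_concat k p y : (y < b ^ k)%nat ->
  Hfun b h (p * b ^ k + y) = (Hfun b h p + Hfun b h y)%nat.
Proof.
  revert p y; induction k as [|k IH]; intros p y Hy.
  - simpl in Hy. replace y with 0%nat by lia.
    rewrite Nat.pow_0_r, Nat.mul_1_r, !Nat.add_0_r. reflexivity.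
  - rewrite Nat.pow_succ_r' in Hy.
    assert (Hq : (y / b < b ^ k)%nat) by (apply Nat.Div0.div_lt_upper_bound; lia).
    assert (Hr : (y mod b < b)%nat) by (apply Nat.mod_upper_bound; lia).
    pose proof (Nat.div_mod_eq y b) as Ey.
    replace (p * b ^ S k + y)%nat with ((p * b ^ k + y / b) * b + y mod b)%nat
      by (rewrite Nat.pow_succ_r'; nia).
    rewrite Hfun_digit, IH by auto.
    replace y with (y / b * b + y mod b)%nat at 3 by lia.
    rewrite Hfun_digit by auto. lia.
Qed.

Fixpoint repunit (s : nat) : nat :=
  match s with O => O | S s => (repunit s * b + 1)%nat end.

Lemma repunit_bounds s : (1 <= s)%nat -> (b ^ (s - 1) <= repunit s < b ^ s)%nat.
Proof.
  induction s as [|s IH]; intros Hs; [lia|].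
  destruct s as [|s]; [simpl; lia|].
  specialize (IH ltac:(lia)). replace (S (S s) - 1)%nat with (S s) by lia.
  replace (S s - 1)%nat with s in IH by lia.
  change (repunit (S (S s))) with (repunit (S s) * b + 1)%nat.
  rewrite !Nat.pow_succ_r' in *. nia.
Qed.

Lemma exists_prefix_with_digit_sum (h1 : h 1%nat = 1%nat) s j : (1 <= s <= j)%nat ->
  exists p, (b ^ (j - 1) <= p < b ^ j)%nat /\ Hfun b h p = s.
Proof.
  intros Hs. destruct (repunit_bounds s ltac:(lia)) as [Hr1 Hr2].
  exists (repunit s * b ^ (j - s))%nat. split; [split|].
  - replace (j - 1)%nat with ((s - 1) + (j - s))%nat by lia.
    rewrite Nat.pow_add_r. apply Nat.mul_le_mono_r; lia.
  - replace j with (s + (j - s))%nat at 2 by lia. rewrite Nat.pow_add_r.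
    apply Nat.mul_lt_mono_pos_r; [apply Nat.neq_0_lt_0, Nat.pow_nonzero|]; lia.
  - rewrite <- (Nat.add_0_r (_ * _)), Hfun_concat
      by (apply Nat.neq_0_lt_0, Nat.pow_nonzero; lia).
    change (Hfun b h 0) with 0%nat. rewrite Nat.add_0_r.
    clear Hr1 Hr2 Hs. induction s as [|s IH]; [reflexivity|].
    simpl repunit. rewrite Hfun_digit, h1, IH by lia. reflexivity.
Qed.

Lemma rsum_digit_values : rsum (fun d => INR (h d)) b = INR b * digit_mean b h.
Proof.
  unfold digit_mean. rewrite sum_f_R0_rsum. replace (S (b - 1)) with b by lia.
  field. apply not_0_INR. lia.
Qed.

Lemma rsum_digit_square_deviation :
  rsum (fun d => (INR (h d) - digit_mean b h) ^ 2) b = INR b * digit_var b h.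
Proof.
  unfold digit_var. rewrite sum_f_R0_rsum. replace (S (b - 1)) with b by lia.
  field. apply not_0_INR. lia.
Qed.

(* Splitting off the last digit, the cross term vanishes because the deviations
   [h d - mu] of the digit values sum to zero. *)
Lemma digit_sum_variance k :
  rsum (fun y => (INR (Hfun b h y) - INR k * digit_mean b h) ^ 2) (b ^ k)
  = INR (b ^ k) * INR k * digit_var b h.
Proof.
  set (mu := digit_mean b h). set (v := digit_var b h).
  induction k as [|k IH]; [simpl; ring|].
  rewrite Nat.pow_succ_r', Nat.mul_comm, rsum_mul.
  transitivity (rsum (fun q => INR b * (INR (Hfun b h q) - INR k * mu) ^ 2 + INR b * v) (b ^ k)).
  - apply rsum_ext. intros q _.
    transitivity (rsum (fun d => (INR (Hfun b h q) - INR k * mu) ^ 2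
        + 2 * (INR (Hfun b h q) - INR k * mu) * (INR (h d) - mu) + (INR (h d) - mu) ^ 2) b).
    + apply rsum_ext. intros d Hd. rewrite Hfun_digit, plus_INR, S_INR by assumption. ring.
    + unfold Rminus at 3. rewrite !rsum_plus, rsum_scal, rsum_plus, rsum_const.
      unfold mu, v. rewrite rsum_digit_values, rsum_digit_square_deviation, rsum_const. ring.
  - rewrite rsum_plus, rsum_scal, rsum_const, IH, mult_INR, S_INR. ring.
Qed.

Lemma digit_mean_ge (h1 : h 1%nat = 1%nat) : 1 <= INR b * digit_mean b h.
Proof.
  rewrite <- rsum_digit_values. replace 1 with (INR (h 1)) by (rewrite h1; reflexivity).
  apply (rsum_ge_term (fun d => INR (h d))); [intros; apply pos_INR|lia].
Qed.

Lemma digit_var_ge0 : 0 <= digit_var b h.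
Proof.
  unfold digit_var. apply Rmult_le_pos.
  - left. apply Rinv_0_lt_compat, lt_0_INR. lia.
  - apply cond_pos_sum. intros; apply pow2_ge_0.
Qed.

Lemma digit_sum_concentration k B : 0 < B ->
  INR (b ^ k) * (1 - / B ^ 2)
  <= rsum (fun y => near_ind (INR k * digit_mean b h)
                             (digit_sd b h * B * sqrt (INR k)) (INR (Hfun b h y))) (b ^ k).
Proof.
  intros HB.
  assert (Hsd : 0 <= digit_sd b h) by apply sqrt_pos.
  apply chebyshev_count.
  - left. apply Rinv_0_lt_compat, pow_lt, HB.
  - apply Rmult_le_pos; [apply Rmult_le_pos; lra|apply sqrt_pos].
  - rewrite digit_sum_variance. right.
    replace ((digit_sd b h * B * sqrt (INR k)) ^ 2)
      with ((sqrt (digit_var b h) * sqrt (digit_var b h)) * (sqrt (INR k) * sqrt (INR k)) * B ^ 2)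
      by (unfold digit_sd; ring).
    rewrite !sqrt_sqrt by (apply digit_var_ge0 || apply pos_INR).
    field. lra.
Qed.

End Digits.

Lemma block_strict b j p : (1 < b)%nat -> (1 <= j)%nat -> (b ^ (j - 1) <= p < b ^ j)%nat ->
  strict b (4 * j) (p * b ^ (3 * j)) (p * b ^ (3 * j) + b ^ (3 * j) - 1).
Proof.
  intros Hb Hj [Hp1 Hp2].
  assert (Hpos : (0 < b ^ (3 * j))%nat) by (apply Nat.neq_0_lt_0, Nat.pow_nonzero; lia).
  unfold strict, icard. split; [lia|split; [|split]].
  - replace (4 * j - 1)%nat with ((j - 1) + 3 * j)%nat by lia.
    rewrite Nat.pow_add_r. apply Nat.mul_le_mono_r; exact Hp1.
  - assert (Hlast : ((p + 1) * b ^ (3 * j) <= b ^ j * b ^ (3 * j))%nat)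
      by (apply Nat.mul_le_mono_r; lia).
    rewrite <- Nat.pow_add_r in Hlast.
    replace (j + 3 * j)%nat with (4 * j)%nat in Hlast by lia. lia.
  - replace (p * b ^ (3 * j) + b ^ (3 * j) - 1 + 1 - p * b ^ (3 * j))%nat
      with (b ^ (3 * j))%nat by lia.
    rewrite pow_INR, <- Rpower_pow by (apply lt_0_INR; lia).
    f_equal. rewrite !mult_INR. simpl. field.
Qed.

Section Blocks.
Variables (b : nat) (h : nat -> nat) (C : nat -> Prop).
Hypotheses (Hb : (1 < b)%nat) (h0 : h 0%nat = 0%nat).

Definition typeC_ind (x : nat) : R :=
  if excluded_middle_informative (typeC b h C x) then 1 else 0.

Lemma typeC_ind_ge0 x : 0 <= typeC_ind x.
Proof. unfold typeC_ind. destruct excluded_middle_informative; lra. Qed.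

Lemma typeC_ind_Hfun x : typeC_ind (Hfun b h x) <= typeC_ind x.
Proof.
  unfold typeC_ind.
  destruct (excluded_middle_informative (typeC b h C (Hfun b h x))) as [[k Hk]|];
  destruct (excluded_middle_informative (typeC b h C x)) as [|Hn]; try lra.
  exfalso. apply Hn. exists (S k). now rewrite Nat.iter_succ_r.
Qed.

Lemma density_rsum a c :
  density b h C a c = rsum (fun i => typeC_ind (a + i)) (icard a c) / INR (icard a c).
Proof.
  unfold density, count_typeC. rewrite length_filter_rsum. f_equal.
  apply rsum_ext. intros i _. unfold typeC_ind. now destruct excluded_middle_informative.
Qed.

Lemma block_density k p :
  rsum (fun y => typeC_ind (Hfun b h p + Hfun b h y)) (b ^ k) / INR (b ^ k)
  <= density b h C (p * b ^ k) (p * b ^ k + b ^ k - 1).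
Proof.
  assert (Hpos : (0 < b ^ k)%nat) by (apply Nat.neq_0_lt_0, Nat.pow_nonzero; lia).
  rewrite density_rsum. unfold icard.
  replace (p * b ^ k + b ^ k - 1 + 1 - p * b ^ k)%nat with (b ^ k)%nat by lia.
  apply Rmult_le_compat_r; [left; apply Rinv_0_lt_compat, lt_0_INR; lia|].
  apply rsum_le. intros y Hy. rewrite <- (Hfun_concat b h Hb h0 k) by assumption.
  apply typeC_ind_Hfun.
Qed.

End Blocks.

Lemma sqrt_le_of_sq x q : 0 <= q -> x <= q ^ 2 -> sqrt x <= q.
Proof.
  intros Hq Hx. destruct (Rle_dec 0 x).
  - rewrite <- (sqrt_pow2 q Hq). apply sqrt_le_1_alt. lra.
  - rewrite sqrt_neg_0 by lra. lra.
Qed.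

Section BlockExponent.
Variables (bR mu sg B P a : R).
Hypotheses (Hb : 2 <= bR) (Hmu : 0 < mu) (Hbmu : 1 <= bR * mu) (Hsg : 0 <= sg) (HB : 0 < B)
  (HBP : B ^ 8 = bR * P) (HPa : P <= a)
  (HB1 : 4 * (1 + 3 * mu + sqrt 2 * sg * B ^ 5) <= P)
  (HB3 : 4 * mu * (3 * mu + 1 + B ^ 6 + 2 * sg * / sqrt mu * B ^ 5) <= P).

Lemma P_lower_bound : 4 + 12 * mu <= P.
Proof.
  assert (0 <= sqrt 2 * sg * B ^ 5)
    by (apply Rmult_le_pos; [apply Rmult_le_pos; [apply sqrt_pos|lra]|apply pow_le; lra]).
  lra.
Qed.

Lemma B8_lower_bound : 20 <= B ^ 8.
Proof. pose proof P_lower_bound. nra. Qed.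

Lemma exponent_start_fits x : P / (4 * mu) <= x < P / (4 * mu) + 1 ->
  3 * x * mu + sg * B * sqrt (3 * x) < a.
Proof.
  intros [Hx1 Hx2].
  assert (Hs2 : 1.41 <= sqrt 2)
    by (rewrite <- (sqrt_pow2 1.41) by lra; apply sqrt_le_1_alt; lra).
  pose proof P_lower_bound as HP. pose proof B8_lower_bound as HB8.
  assert (HB4 : 4 <= B ^ 4) by nra.
  assert (HxP : x * mu < P / 4 + mu) by (assert (P / (4 * mu) * mu = P / 4) by (field; lra); nra).
  assert (HPm : P / mu <= B ^ 8).
  { rewrite HBP. apply Rmult_le_reg_r with mu; auto.
    replace (P / mu * mu) with P by (field; lra). nra. }
  assert (Hx3 : 3 * x <= 0.75 * B ^ 8 + 3)
    by (assert (P / (4 * mu) = / 4 * (P / mu)) by (field; lra); lra).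
  assert (HX : sqrt (3 * x) <= 0.87 * B ^ 4 + 2) by (apply sqrt_le_of_sq; nra).
  assert (HB5 : 0 <= sg * B ^ 5) by (apply Rmult_le_pos; [lra|apply pow_le; lra]).
  assert (H5 : 1.41 * (sg * B ^ 5) <= sqrt 2 * sg * B ^ 5)
    by (rewrite Rmult_assoc; apply Rmult_le_compat_r; lra).
  assert (HsgB : sg * B * sqrt (3 * x) <= sg * B * (0.87 * B ^ 4 + 2))
    by (apply Rmult_le_compat_l; [nra|exact HX]).
  assert (Hk : 2 * (sg * B) <= 0.54 * (sg * B ^ 5))
    by (replace (sg * B ^ 5) with ((sg * B) * B ^ 4) by ring; nra).
  nra.
Qed.

Lemma exponent_threshold_slack :
  3 * (sg * B) <= sqrt (3 * (P / (4 * mu))) /\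
  3 * mu + B ^ 6 + 2 * (sg * B) + 2 * (sg * B * sqrt (3 * (P / (4 * mu)))) < P / (4 * mu) + 2.
Proof.
  pose proof P_lower_bound as HP. pose proof B8_lower_bound as HB8.
  assert (HB4 : 4 <= B ^ 4) by nra.
  assert (HB2 : 2 <= B ^ 2) by nra.
  set (J := P / (4 * mu)).
  set (sm := sqrt mu) in *.
  assert (Hsm : 0 < sm) by (apply sqrt_lt_R0; auto).
  assert (Hsm2 : sm * sm = mu) by (apply sqrt_sqrt; lra).
  set (K := sg * B ^ 5 / sm).
  assert (HK0 : 0 <= K).
  { apply Rmult_le_pos; [apply Rmult_le_pos; [lra|apply pow_le; lra]|].
    left; apply Rinv_0_lt_compat; auto. }
  assert (HJ : 3 * mu + 1 + B ^ 6 + 2 * K <= J).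
  { unfold J, K. apply Rmult_le_reg_l with (4 * mu); [lra|].
    replace (4 * mu * (P / (4 * mu))) with P by (field; lra).
    replace (2 * (sg * B ^ 5 / sm)) with (2 * sg * / sm * B ^ 5) by (field; lra). lra. }
  assert (Hmu2 : 12 * (mu * mu) <= P).
  { assert (4 * mu * J = P) by (unfold J; field; lra).
    assert (0 <= 4 * mu * (1 + B ^ 6 + 2 * K))
      by (apply Rmult_le_pos; [lra|assert (0 <= B ^ 6) by (apply pow_le; lra); lra]).
    nra. }
  assert (HPb : P <= B ^ 8 / 2) by nra.
  assert (Hmub : mu <= B ^ 4 / 4.89) by (assert (mu * mu <= (B ^ 4 / 4.89) ^ 2) by nra; nra).
  assert (Hsmb : sm <= B ^ 2 / 2.21) by (assert (sm * sm <= (B ^ 2 / 2.21) ^ 2) by nra; nra).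
  assert (HKs : 4.42 * (sg * B) <= K).
  { unfold K. apply Rmult_le_reg_r with sm; auto.
    replace (sg * B ^ 5 / sm * sm) with ((sg * B) * B ^ 4) by (field; lra).
    assert (0 <= sg * B) by nra. assert (4.42 * sm <= B ^ 4) by nra. nra. }
  set (Z := sqrt (3 * J)).
  assert (HJ0 : 0 <= J) by (assert (0 <= B ^ 6) by (apply pow_le; lra); lra).
  assert (HZ2 : Z * Z = 3 * J) by (apply sqrt_sqrt; lra).
  assert (HZ0 : 0 <= Z) by apply sqrt_pos.
  assert (HZsm : Z * sm <= 0.62 * B ^ 4).
  { assert ((Z * sm) * (Z * sm) = 3 * P / 4)
      by (replace ((Z * sm) * (Z * sm)) with ((Z * Z) * (sm * sm)) by ring;
          rewrite HZ2, Hsm2; unfold J; field; lra).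
    assert (0 <= Z * sm) by nra. nra. }
  assert (HsgZ : sg * B * Z <= 0.62 * K).
  { unfold K. apply Rmult_le_reg_r with sm; auto.
    replace (0.62 * (sg * B ^ 5 / sm) * sm) with ((sg * B) * (0.62 * B ^ 4)) by (field; lra).
    rewrite Rmult_assoc. apply Rmult_le_compat_l; [nra|exact HZsm]. }
  assert (HB6 : 8 <= B ^ 6) by nra.
  split; nra.
Qed.

Lemma exponent_last_fits y : P / (4 * mu) <= y ->
  a <= 3 * (y + 1) * mu + sg * B * sqrt (3 * (y + 1)) ->
  a + B ^ 6 - 1 - 3 * y * mu + sg * B * sqrt (3 * y) < y + 1.
Proof.
  intros Hy Ha.
  destruct exponent_threshold_slack as [HZs Hslack].
  pose proof P_lower_bound.
  set (J := P / (4 * mu)) in *. set (Z := sqrt (3 * J)) in *. set (Y := sqrt (3 * y)).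
  assert (HJ0 : 0 <= J) by (apply Rmult_le_pos; [lra|left; apply Rinv_0_lt_compat; lra]).
  assert (HZ2 : Z * Z = 3 * J) by (apply sqrt_sqrt; lra).
  assert (HY2 : Y * Y = 3 * y) by (apply sqrt_sqrt; lra).
  assert (HY0 : 0 <= Y) by apply sqrt_pos.
  assert (HYZ : Z <= Y) by (apply sqrt_le_1_alt; lra).
  assert (HY' : sqrt (3 * (y + 1)) <= Y + 2) by (apply sqrt_le_of_sq; nra).
  assert (HsgB : 0 <= sg * B) by nra.
  assert (Hmono : J - 2 * (sg * B * Z) <= y - 2 * (sg * B * Y)) by nra.
  assert (sg * B * sqrt (3 * (y + 1)) <= sg * B * (Y + 2)) by (apply Rmult_le_compat_l; lra).
  nra.
Qed.

Lemma exists_block_exponent : exists j : nat,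
  P / mu <= 4 * INR j /\ 3 * INR j * mu + sg * B * sqrt (3 * INR j) < a /\
  a + B ^ 6 - 1 - 3 * INR j * mu + sg * B * sqrt (3 * INR j) < INR j + 1.
Proof.
  pose proof P_lower_bound as HP.
  assert (HJ0 : 0 <= P / (4 * mu)) by (apply Rmult_le_pos; [lra|left; apply Rinv_0_lt_compat; lra]).
  destruct (nat_ceil_exists _ HJ0) as [j0 Hj0].
  assert (Ha0 : 0 <= a / (3 * mu)) by (apply Rmult_le_pos; [lra|left; apply Rinv_0_lt_compat; lra]).
  destruct (nat_ceil_exists _ Ha0) as [N HN].
  set (fits := fun j : nat => 3 * INR j * mu + sg * B * sqrt (3 * INR j) < a).
  assert (Hfar : ~ fits (j0 + N)%nat).
  { unfold fits. rewrite plus_INR. intros Hc.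
    assert (a <= INR N * (3 * mu)).
    { replace a with (a / (3 * mu) * (3 * mu)) at 1 by (field; lra).
      apply Rmult_le_compat_r; lra. }
    assert (0 <= sg * B * sqrt (3 * (INR j0 + INR N)))
      by (apply Rmult_le_pos; [nra|apply sqrt_pos]).
    pose proof (pos_INR j0). nra. }
  destruct (nat_last_true fits N j0) as [j [Hjj0 [Hj HjS]]];
    [apply exponent_start_fits; lra|exact Hfar|].
  apply le_INR in Hjj0.
  exists j. split; [|split; [exact Hj|]].
  - replace (P / mu) with (4 * (P / (4 * mu))) by (field; lra). lra.
  - unfold fits in HjS. rewrite S_INR in HjS. apply Rnot_lt_le in HjS.
    apply exponent_last_fits; lra.
Qed.

End BlockExponent.

Lemma density_ge_of_counts (D L N Ng G dens e1 e2 w : R) :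
  0 <= D -> 0 < L -> 0 < N -> 0 <= w -> e1 <= 1 -> 0 <= e2 -> 2 * w <= e2 * L ->
  N * (1 - e1) <= Ng -> Ng * D <= (L + 2 * w) * G -> G / N <= dens ->
  D / L * (1 - e1) * (1 - e2) <= dens.
Proof.
  intros HD HL HN Hw He1 He2 Hwe HNg HG Hdens.
  assert (HNgD : 0 <= Ng * D) by (apply Rmult_le_pos; nra).
  assert (HG0 : 0 <= G).
  { apply Rnot_lt_le. intros HGneg.
    assert ((L + 2 * w) * G < 0) by (apply Rmult_pos_neg; lra). lra. }
  assert (HGN : G <= N * dens).
  { apply Rmult_le_reg_r with (/ N); [apply Rinv_0_lt_compat; lra|].
    replace (N * dens * / N) with dens by (field; lra). exact Hdens. }
  assert (Hdens0 : 0 <= dens) by nra.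
  assert (HD1 : D * (1 - e1) <= (L + 2 * w) * dens).
  { apply Rmult_le_reg_l with N; [lra|]. nra. }
  unfold Rdiv. destruct (Rle_dec (1 - e2) 0).
  - assert (0 <= D * / L * (1 - e1)).
    { apply Rmult_le_pos; [apply Rmult_le_pos; [lra|left; apply Rinv_0_lt_compat; lra]|lra]. }
    nra.
  - apply Rmult_le_reg_l with L; [lra|].
    replace (L * (D * / L * (1 - e1) * (1 - e2))) with (D * (1 - e1) * (1 - e2)) by (field; lra).
    apply Rle_trans with ((L + 2 * w) * dens * (1 - e2)); [apply Rmult_le_compat_r; lra|].
    assert ((L + 2 * w) * (1 - e2) <= L) by nra.
    replace ((L + 2 * w) * dens * (1 - e2)) with ((L + 2 * w) * (1 - e2) * dens) by ring.
    apply Rmult_le_compat_r; lra.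
Qed.

Lemma pow_lower_bounds_of_pow8 B : 0 < B -> 20 <= B ^ 8 -> 1 <= B ^ 2 /\ 2 <= B ^ 6.
Proof.
  intros HB HB8.
  assert (HB2 : 1 <= B ^ 2).
  { apply Rnot_lt_le. intros HBlt.
    assert (HB4 : (B ^ 2) ^ 4 <= 1 ^ 4) by (apply pow_incr; split; [apply pow_le|]; lra).
    rewrite <- pow_mult, pow1 in HB4. simpl in HB4. lra. }
  split; [exact HB2|].
  assert (B ^ 2 <= B ^ 6).
  { replace (B ^ 6) with (B ^ 2 * (B ^ 2 * B ^ 2)) by ring.
    rewrite <- (Rmult_1_r (B ^ 2)) at 1. apply Rmult_le_compat_l; nra. }
  replace (B ^ 8) with (B ^ 6 * B ^ 2) in HB8 by ring. nra.
Qed.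

Lemma spread_le_relative_error (sg mu B x : R) :
  0 <= sg -> 0 < mu -> 0 < B -> 0 <= x -> x * mu <= B ^ 8 ->
  2 * (sg * B * sqrt x) <= 2 * sg / sqrt mu * / B * B ^ 6.
Proof.
  intros Hsg Hmu HB Hx Hxmu.
  assert (Hsm : 0 < sqrt mu) by (apply sqrt_lt_R0; lra).
  assert (Hxm : sqrt x * sqrt mu <= B ^ 4).
  { rewrite <- sqrt_mult by lra. apply sqrt_le_of_sq; [apply pow_le; lra|].
    replace ((B ^ 4) ^ 2) with (B ^ 8) by ring. exact Hxmu. }
  replace (2 * sg / sqrt mu * / B * B ^ 6) with (2 * (sg * B) * (B ^ 4 / sqrt mu))
    by (field; lra).
  rewrite (Rmult_assoc 2). apply Rmult_le_compat_l; [lra|].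
  apply Rmult_le_compat_l; [nra|].
  apply Rmult_le_reg_r with (sqrt mu); [exact Hsm|].
  replace (B ^ 4 / sqrt mu * sqrt mu) with (B ^ 4) by (field; lra). exact Hxm.
Qed.

Section DenseInterval.
Variables (b : nat) (h : nat -> nat) (C : nat -> Prop).
Hypotheses (Hb : (1 < b)%nat) (h0 : h 0%nat = 0%nat) (h1 : h 1%nat = 1%nat).

Lemma dense_strict_interval (B : R) (n a c : nat) :
  0 < B -> B ^ 8 = INR b ^ n -> (0 < n)%nat ->
  (b ^ (n - 1) <= a)%nat -> (c <= b ^ n - 1)%nat -> INR (icard a c) = B ^ 6 ->
  4 * (1 + 3 * digit_mean b h + sqrt 2 * digit_sd b h * B ^ 5) <= INR (b ^ (n - 1)) ->
  4 * digit_mean b h * (3 * digit_mean b h + 1 + B ^ 6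
                        + 2 * digit_sd b h * / sqrt (digit_mean b h) * B ^ 5)
    <= INR (b ^ (n - 1)) ->
  exists n2 a2 c2 : nat,
    INR (b ^ (n - 1)) / digit_mean b h <= INR n2 /\ strict b n2 a2 c2 /\
    density b h C a c * (1 - / B ^ 2) * (1 - 2 * digit_sd b h / sqrt (digit_mean b h) * / B)
    <= density b h C a2 c2.
Proof.
  intros HB HB8 Hn Ha Hc HL HB1 HB3.
  set (mu := digit_mean b h) in *. set (sg := digit_sd b h) in *.
  set (P := INR (b ^ (n - 1))) in *. set (L := icard a c) in *.
  assert (Hb2 : 2 <= INR b) by (apply (le_INR 2); lia).
  assert (Hbmu : 1 <= INR b * mu) by (apply digit_mean_ge; assumption).
  assert (Hmu : 0 < mu) by nra.
  assert (Hsg : 0 <= sg) by apply sqrt_pos.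
  assert (HBP : B ^ 8 = INR b * P).
  { rewrite HB8. unfold P. rewrite pow_INR. replace n with (S (n - 1)) at 1 by lia. reflexivity. }
  assert (HPa : P <= INR a) by (apply le_INR; exact Ha).
  assert (HB20 : 20 <= B ^ 8) by (eapply B8_lower_bound; eauto).
  destruct (pow_lower_bounds_of_pow8 B HB HB20) as [HB2 HB6].
  assert (HL2 : (2 <= L)%nat) by (apply INR_le; simpl; lra).
  assert (HaL : INR a + INR L <= B ^ 8).
  { rewrite HB8, <- pow_INR, <- plus_INR. apply le_INR. unfold L, icard in *.
    assert (0 < b ^ n)%nat by (apply Nat.neq_0_lt_0, Nat.pow_nonzero; lia). lia. }
  destruct (exists_block_exponent (INR b) mu sg B P (INR a)) as [j [Hj1 [Hj2 Hj3]]]; auto.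
  set (k := (3 * j)%nat). set (t := INR k * mu). set (w := sg * B * sqrt (INR k)).
  assert (Ek : INR k = 3 * INR j) by (unfold k; rewrite mult_INR; simpl; ring).
  assert (Hw : 0 <= w) by (apply Rmult_le_pos; [nra|apply sqrt_pos]).
  destruct (window_averaging (typeC_ind b h C) (Hfun b h) (b ^ k) a L j t w)
    as [s [Hs Hwin]]; try (unfold t, w; rewrite Ek; lra); auto using typeC_ind_ge0.
  destruct (exists_prefix_with_digit_sum b h Hb h0 h1 s j Hs) as [p [Hp Hps]].
  exists (4 * j)%nat, (p * b ^ k)%nat, (p * b ^ k + b ^ k - 1)%nat.
  split; [rewrite mult_INR; simpl; lra|split; [apply block_strict; auto; lia|]].
  rewrite density_rsum. fold L.
  apply (density_ge_of_counts _ _ (INR (b ^ k))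
           (rsum (fun y => near_ind t w (INR (Hfun b h y))) (b ^ k))
           (rsum (fun y => typeC_ind b h C (s + Hfun b h y)) (b ^ k)) _ _ _ w).
  - apply rsum_ge0. intros; apply typeC_ind_ge0.
  - apply lt_0_INR. lia.
  - apply lt_0_INR, Nat.neq_0_lt_0, Nat.pow_nonzero. lia.
  - exact Hw.
  - rewrite <- Rinv_1. apply Rinv_le_contravar; lra.
  - apply Rmult_le_pos; [apply Rmult_le_pos; [lra|left; apply Rinv_0_lt_compat, sqrt_lt_R0; lra]
                        |left; apply Rinv_0_lt_compat; lra].
  - rewrite HL. apply spread_le_relative_error; try assumption.
    + apply pos_INR.
    + pose proof (pos_INR L). unfold t, w in *. rewrite Ek in *. lra.
  - apply digit_sum_concentration; assumption.
  - exact Hwin.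
  - rewrite <- Hps. apply block_density; assumption.
Qed.

End DenseInterval.

Lemma Rpower_eighths x n m : 0 < x -> Rpower x (INR m * INR n / 8) = Rpower x (INR n / 8) ^ m.
Proof.
  intros Hx. rewrite <- Rpower_pow by (unfold Rpower; apply exp_pos).
  rewrite Rpower_mult. f_equal. field.
Qed.

Theorem theorem3p4 (b : nat) (h : nat -> nat) (C : nat -> Prop) (n a c : nat) (d : R) :
  (1 < b)%nat -> h 0%nat = 0%nat -> h 1%nat = 1%nat ->
  (0 < n)%nat ->
  strict b n a c ->
  d = density b h C a c ->
  (* (B1) *)
  4 * (1 + 3 * digit_mean b h + sqrt 2 * digit_sd b h * Rpower (INR b) (5 * INR n / 8))
    <= INR (b ^ (n - 1)) ->
  (* (B2) *)
  sqrt (3 * digit_mean b h * INR b) * digit_sd b h <= Rpower (INR b) (3 * INR n / 8) ->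
  (* (B3) *)
  4 * digit_mean b h *
    (3 * digit_mean b h + 1 + Rpower (INR b) (3 * INR n / 4)
     + 2 * digit_sd b h * Rpower (digit_mean b h) (- (1 / 2)) * Rpower (INR b) (5 * INR n / 8))
    <= INR (b ^ (n - 1)) ->
  exists n2 a2 c2 : nat,
    INR (b ^ (n - 1)) / digit_mean b h <= INR n2 /\
    strict b n2 a2 c2 /\
    d * (1 - Rpower (INR b) (- (INR n / 4)))
      * (1 - 2 * digit_sd b h / sqrt (digit_mean b h) * Rpower (INR b) (- (INR n / 8)))
    <= density b h C a2 c2.
Proof.
  intros Hb h0 h1 Hn [_ [Ha [Hc HL]]] -> HB1 _ HB3.
  assert (Hb0 : 0 < INR b) by (apply lt_0_INR; lia).
  assert (Hmu : 0 < digit_mean b h) by (pose proof (digit_mean_ge b h Hb h0 h1); nra).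
  replace (Rpower (digit_mean b h) (- (1 / 2))) with (/ sqrt (digit_mean b h)) in HB3
    by (rewrite Rpower_Ropp, <- Rpower_sqrt by exact Hmu; do 2 f_equal; field).
  replace (3 * INR n / 4) with (INR 6 * INR n / 8) in * by (simpl; field).
  replace (5 * INR n / 8) with (INR 5 * INR n / 8) in * by (simpl; field).
  replace (- (INR n / 4)) with (- (INR 2 * INR n / 8)) by (simpl; field).
  rewrite Rpower_Ropp, (Rpower_Ropp _ (INR n / 8)), !Rpower_eighths in * by exact Hb0.
  apply dense_strict_interval; auto.
  - unfold Rpower; apply exp_pos.
  - rewrite <- Rpower_eighths, <- Rpower_pow by assumption. f_equal. simpl. field.
Qed.
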